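(* For every $b>1$ and every $\delta>0$ there exists an instance (a finite directed acyclic graph with nonnegative edge costs, start node $s$ and target node $t$) on which the cost $C_s(s)$ incurred by the sophisticated agent with present-bias parameter $b$ is at least $(b-\delta)$ times the cost $C_n(s)$ incurred by the naive agent with present-bias parameter $b$. That is, the ratio of the sophisticated agent's cost to the naive agent's cost can be arbitrarily close to $b$.
   Context: An instance is a finite directed acyclic graph $G=(V,E)$ with nonnegative edge costs $c(u,v)$, start node $s$ and target node $t$, where $t$ is the unique node with no outgoing edges. $C_o(u)$ denotes the minimum cost of a $u$–$t$ path. Sophisticated agent with bias $b$: $C_s(t)=0$, and for $u\ne t$, $S_s(u)\in\arg\min_{v:(u,v)\in E}(b\,c(u,v)+C_s(v))$, $C_s(u)=c(u,S_s(u))+C_s(S_s(u))$. Naive agent with bias $b$: $C_n(t)=0$, and for $u\ne t$, $S_n(u)\in\arg\min_{v:(u,v)\in E}(b\,c(u,v)+C_o(v))$, $C_n(u)=c(u,S_n(u))+C_n(S_n(u))$. Each agent starting at $s$ repeatedly moves to its chosen successor until reaching $t$; its incurred cost is $C_s(s)$, respectively $C_n(s)$. *)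

From mathcomp Require Import all_boot all_order all_algebra.
From mathcomp Require Import reals.
Set Implicit Arguments. Unset Strict Implicit. Unset Printing Implicit Defensive.
Import Order.TTheory GRing.Theory Num.Theory.
Local Open Scope ring_scope.

Section Defs.
Variables (R : realType) (V : finType).

Definition path_cost (c : V -> V -> R) (u : V) (p : seq V) : R :=
  \sum_(e <- zip (u :: p) p) c e.1 e.2.

Definition is_instance (E : rel V) (c : V -> V -> R) (t : V) : Prop :=
  (forall u v, E u v -> ~~ connect E v u) /\
  (forall u v, E u v -> 0 <= c u v) /\
  (forall u, (forall v, ~~ E u v) <-> u = t).

Definition is_opt_cost (E : rel V) (c : V -> V -> R) (t : V) (Co : V -> R)
  : Prop :=
  forall u,
    (exists p, [/\ path E u p, last u p = t & path_cost c u p = Co u]) /\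
    (forall p, path E u p -> last u p = t -> Co u <= path_cost c u p).

Definition soph_agent (E : rel V) (c : V -> V -> R) (t : V) (b : R)
  (Ss : V -> V) (Cs : V -> R) : Prop :=
  Cs t = 0 /\
  forall u, u != t ->
    [/\ E u (Ss u),
        (forall v, E u v -> b * c u (Ss u) + Cs (Ss u) <= b * c u v + Cs v)
      & Cs u = c u (Ss u) + Cs (Ss u)].

Definition naive_agent (E : rel V) (c : V -> V -> R) (t : V) (b : R)
  (Co : V -> R) (Sn : V -> V) (Cn : V -> R) : Prop :=
  Cn t = 0 /\
  forall u, u != t ->
    [/\ E u (Sn u),
        (forall v, E u v -> b * c u (Sn u) + Co (Sn u) <= b * c u v + Co v)
      & Cn u = c u (Sn u) + Cn (Sn u)].

End Defs.

(* The instance has two routes from s to t.  Paying K first leads to a node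
   where the agent still has the choice between finishing at cost 1 or
   postponing to an edge of cost z, with 1 < z < b; either agent postpones
   there, so this route really costs K + z.  The other route postpones
   everything, paying b K + m later, with 1 < m < z.  The naive agent believes
   the first route costs K + 1 and prefers it to the postponed one; the
   sophisticated agent knows it costs K + z and postpones, paying b K + m.
   Hence C_s(s) / C_n(s) = (b K + m) / (K + z), which tends to b as K grows. *)

From HB Require Import structures.
From mathcomp Require Import all_boot all_order all_algebra.
From mathcomp Require Import reals.
From mathcomp Require Import ring lra.
Set Implicit Arguments. Unset Strict Implicit. Unset Printing Implicit Defensive.
Import Order.TTheory GRing.Theory Num.Theory.
Local Open Scope ring_scope.

Section Agents.
Variables (R : realType) (V : finType) (E : rel V) (c : V -> V -> R) (t : V).

Lemma path_cost_cons u v p : path_cost c u (v :: p) = c u v + path_cost c v p.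
Proof. by rewrite /path_cost /= big_cons. Qed.

Lemma acyclic_of_rank (rank : V -> nat) :
  (forall u v, E u v -> (rank u < rank v)%N) ->
  forall u v, E u v -> ~~ connect E v u.
Proof.
move=> rankE u v uv; apply/negP => /connectP [p vp up].
have rank_last : (rank v <= rank (last v p))%N.
  elim: p v vp {up uv} => [|w p IH] v //= /andP[/rankE vw /IH].
  exact/leq_trans/ltnW.
by move: rank_last; rewrite -up leqNgt rankE.
Qed.

Section OptimalCost.
Hypothesis target_sink : forall v, ~~ E t v.
Variable Co : V -> R.
Hypothesis Co_opt : is_opt_cost E c t Co.

Lemma opt_cost_target : Co t = 0.
Proof.
have [[[|v p] [tp _ <-]] _] := Co_opt t; first by rewrite /path_cost big_nil.
by move: tp; rewrite /= (negbTE (target_sink v)).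
Qed.

Lemma opt_cost_edge u v : E u v -> Co u <= c u v + Co v.
Proof.
move=> uv; have [[p [vp vt <-]] _] := Co_opt v.
by rewrite -path_cost_cons; apply: (Co_opt u).2; rewrite //= uv.
Qed.

Lemma opt_cost_bellman u : u != t -> exists2 v, E u v & Co u = c u v + Co v.
Proof.
move=> ut; have [[[|v p] [up /= ut' up_cost]] _] := Co_opt u.
  by rewrite ut' eqxx in ut.
move: up => /= /andP[uv vp]; exists v => //.
apply/le_anti; rewrite opt_cost_edge //=.
by rewrite -up_cost path_cost_cons lerD2l (Co_opt v).2.
Qed.

End OptimalCost.

(* Both agents make, at every node u != t, a greedy step with respect to the
   perceived cost b c(u,v) + W v: W is C_s itself for the sophisticated agent
   and C_o for the naive one. *)
Definition greedy_step (b : R) (W : V -> R) (S : V -> V) (C : V -> R) u :=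
  [/\ E u (S u),
      forall v, E u v -> b * c u (S u) + W (S u) <= b * c u v + W v
    & C u = c u (S u) + C (S u)].

Lemma greedy_step_forced b W S C u v :
  (forall w, E u w -> w = v) -> greedy_step b W S C u -> C u = c u v + C v.
Proof. by move=> succ [uS _ ->]; rewrite (succ _ uS). Qed.

Lemma greedy_step_preferred b W S C u v w :
  (forall x, E u x -> x = v \/ x = w) -> E u v ->
  b * c u v + W v < b * c u w + W w ->
  greedy_step b W S C u -> C u = c u v + C v.
Proof.
move=> succ uv pref [uS Smin ->].
have [-> //|Sw] := succ _ uS.
by move: (Smin v uv); rewrite Sw leNgt pref.
Qed.

End Agents.

Inductive node := Start | Early | EarlyDelay | Late | Target.

Definition nat_of_node (u : node) : nat :=
  match u with
  | Start => 0 | Early => 1 | EarlyDelay => 2 | Late => 3 | Target => 4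
  end.

Definition node_of_nat (k : nat) : option node :=
  nth None [:: Some Start; Some Early; Some EarlyDelay; Some Late; Some Target] k.

Lemma nat_of_nodeK : pcancel nat_of_node node_of_nat.
Proof. by case. Qed.

HB.instance Definition _ := Countable.copy node (pcan_type nat_of_nodeK).

Lemma node_enumP : Finite.axiom [:: Start; Early; EarlyDelay; Late; Target].
Proof. by case. Qed.

HB.instance Definition _ := isFinite.Build node node_enumP.

Definition edge : rel node := fun u v =>
  match u, v with
  | Start, Early | Start, Late | Early, EarlyDelay | Early, Target
  | EarlyDelay, Target | Late, Target => true
  | _, _ => false
  end.

Lemma edge_rank u v : edge u v -> (nat_of_node u < nat_of_node v)%N.
Proof. by case: u; case: v. Qed.

Section Instance.
Variables (R : realType) (b K z m : R).

Definition cost (u v : node) : R :=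
  match u, v with
  | Start, Early => K
  | Early, Target => 1
  | EarlyDelay, Target => z
  | Late, Target => b * K + m
  | _, _ => 0
  end.

Lemma instance_is_instance :
  0 <= K -> 1 < m -> m < z -> z < b -> is_instance edge cost Target.
Proof.
move=> K_ge0 m_gt1 m_lt_z z_lt_b; split; [exact: acyclic_of_rank edge_rank | split].
- have bK_ge0 : 0 <= b * K by rewrite mulr_ge0 //; lra.
  by case; case => //= _; lra.
- by case; split => // succ; [move: (succ Late) | move: (succ Target) ..].
Qed.

Lemma naive_cost_start Co Sn Cn : 1 < m -> z < b ->
  is_opt_cost edge cost Target Co -> naive_agent edge cost Target b Co Sn Cn ->
  Cn Start = K + z.
Proof.
move=> m_gt1 z_lt_b Co_opt [Cn_target Cn_step].
have Co_target : Co Target = 0 by apply: opt_cost_target Co_opt; case.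
have Co_early : Co Early <= 1.
  by have := opt_cost_edge Co_opt (u := Early) (v := Target) isT; rewrite Co_target addr0.
have Co_delay : Co EarlyDelay <= z.
  by have := opt_cost_edge Co_opt (u := EarlyDelay) (v := Target) isT; rewrite Co_target addr0.
have Co_late : Co Late = b * K + m.
  have [[] //= _ ->] := opt_cost_bellman Co_opt (u := Late) isT.
  by rewrite Co_target addr0.
have Cn_delay : Cn EarlyDelay = z.
  rewrite (greedy_step_forced (v := Target) _ (Cn_step EarlyDelay isT)) ?Cn_target ?addr0 //.
  by case.
have Cn_early : Cn Early = z.
  rewrite (greedy_step_preferred (v := EarlyDelay) (w := Target) _ isT _ (Cn_step Early isT)).
  - by rewrite Cn_delay add0r.
  - by case; auto.
  - by rewrite /= Co_target; lra.
rewrite (greedy_step_preferred (v := Early) (w := Late) _ isT _ (Cn_step Start isT)).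
- by rewrite Cn_early.
- by case; auto.
- by rewrite /= Co_late; lra.
Qed.

Lemma soph_cost_start Ss Cs : m < z -> z < b ->
  soph_agent edge cost Target b Ss Cs -> Cs Start = b * K + m.
Proof.
move=> m_lt_z z_lt_b [Cs_target Cs_step].
have Cs_delay : Cs EarlyDelay = z.
  rewrite (greedy_step_forced (v := Target) _ (Cs_step EarlyDelay isT)) ?Cs_target ?addr0 //.
  by case.
have Cs_late : Cs Late = b * K + m.
  rewrite (greedy_step_forced (v := Target) _ (Cs_step Late isT)) ?Cs_target ?addr0 //.
  by case.
have Cs_early : Cs Early = z.
  rewrite (greedy_step_preferred (v := EarlyDelay) (w := Target) _ isT _ (Cs_step Early isT)).
  - by rewrite Cs_delay add0r.
  - by case; auto.
  - by rewrite /= Cs_delay Cs_target; lra.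
rewrite (greedy_step_preferred (v := Late) (w := Early) _ isT _ (Cs_step Start isT)).
- by rewrite Cs_late add0r.
- by case; auto.
- by rewrite /= Cs_late Cs_early; lra.
Qed.

End Instance.

Theorem claim1 (R : realType) (b delta : R) :
  1 < b -> 0 < delta ->
  exists (V : finType) (E : rel V) (c : V -> V -> R) (s t : V),
    is_instance E c t /\
    forall (Co : V -> R) (Sn : V -> V) (Cn : V -> R) (Ss : V -> V) (Cs : V -> R),
      is_opt_cost E c t Co ->
      naive_agent E c t b Co Sn Cn ->
      soph_agent E c t b Ss Cs ->
      0 < Cn s /\ (b - delta) * Cn s <= Cs s.
Proof.
move=> b_gt1 delta_gt0.
pose z := (1 + b) / 2; pose m := (3 + b) / 4; pose K := b * z / delta.
have m_gt1 : 1 < m by rewrite /m; lra.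
have m_lt_z : m < z by rewrite /m /z; lra.
have z_lt_b : z < b by rewrite /z; lra.
have K_gt0 : 0 < K by rewrite /K divr_gt0 // mulr_gt0 //; lra.
(* K is large enough that the loss delta * K absorbs b * z. *)
have delta_K : delta * K = b * z by rewrite /K mulrCA divff ?mulr1 // gt_eqF.
exists node, edge, (cost b K z m), Start, Target.
split=> [|Co Sn Cn Ss Cs Co_opt naive soph].
  exact: instance_is_instance (ltW K_gt0) m_gt1 m_lt_z z_lt_b.
rewrite (naive_cost_start m_gt1 z_lt_b Co_opt naive).
rewrite (soph_cost_start m_lt_z z_lt_b soph).
have -> : (b - delta) * (K + z) = b * K - delta * z.
  by rewrite mulrBl !mulrDr delta_K; ring.
have delta_z_gt0 : 0 < delta * z by rewrite mulr_gt0 //; lra.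
split; lra.
Qed.
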